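(* Let $q$ be a power of the odd prime $p$ and let $f$ be a Dembowski–Ostrom polynomial over $\mathbb F_{q^2}$ defining a planar function. Put $x*y:=\frac12(f(x+y)-f(x)-f(y))$. For $u,v,w\in\mathbb F_{q^2}$ define $\varsigma_{u,v,w}$ on the points of $\Pi(f)$ by $(x,y)\mapsto(x+u,\ y+2w*x-v)$, $(x)\mapsto(x+w-u)$ for $x\in\mathbb F_{q^2}$, and $(\infty)\mapsto(\infty)$. Then: (a) the maps $\varsigma_{u,v,w}$ form a collineation group $\Sigma$ of $\Pi(f)$ of order $q^6$, and $\varsigma_{u',v',w'}\circ\varsigma_{u,v,w}=\varsigma_{u+u',\,v+v'-2w'*u,\,w+w'}$ for all $u,v,w,u',v',w'\in\mathbb F_{q^2}$; (b) the shift group of $\Pi(f)$ equals $\{\varsigma_{u,v,0}:u,v\in\mathbb F_{q^2}\}$; (c) $\{\varsigma_{u,v,u}:u,v\in\mathbb F_{q^2}\}$ is the translation group of $\Pi(f)$; (d) $\{\varsigma_{0,0,w}:w\in\mathbb F_{q^2}\}$ is the group of elations of $\Pi(f)$ with axis $N_0$ and center $(\infty)$.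
   Context: A Dembowski–Ostrom polynomial over $\mathbb F_{q^2}$ is one of the form $\sum_{i,j}a_{ij}x^{p^i+p^j}$ with $a_{ij}\in\mathbb F_{q^2}$; planar means $x\mapsto f(x+a)-f(x)$ is bijective for each $a\neq0$. $\Pi(f)$ is the projective plane with points $(x,y)\in\mathbb F_{q^2}^2$ and $(a)$ for $a\in\mathbb F_{q^2}\cup\{\infty\}$, lines $L_{a,b}=\{(x,f(x+a)-b):x\in\mathbb F_{q^2}\}\cup\{(a)\}$, $N_a=\{(a,y):y\in\mathbb F_{q^2}\}\cup\{(\infty)\}$ ($a,b\in\mathbb F_{q^2}$), $L_\infty=\{(a):a\in\mathbb F_{q^2}\cup\{\infty\}\}$. The shift group of $\Pi(f)$ is the group of collineations induced by $(x,y)\mapsto(x+u,y+v)$, $u,v\in\mathbb F_{q^2}$ (acting on $L_\infty$ as induced). The translation group is the group of all elations with axis $L_\infty$ (collineations fixing every point of $L_\infty$ and every line through some fixed point of $L_\infty$), including the identity. An elation with axis $\ell$ and center $P\in\ell$ is a collineation fixing every point of $\ell$ and every line through $P$. *)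

From HB Require Import structures.
From mathcomp Require Import all_boot all_order all_algebra all_fingroup.
From mathcomp Require Import all_field.
Set Implicit Arguments. Unset Strict Implicit. Unset Printing Implicit Defensive.
Import GRing.Theory.
Local Open Scope ring_scope.

(* Points of Pi(f): inl (x,y) is the affine point (x,y);
   inr (Some a) is the point (a) at infinity, inr None is (infinity). *)
Notation point F := ((F * F) + option F)%type.
(* Lines of Pi(f): inl (a,b) is L_{a,b}; inr (Some a) is N_a; inr None is L_infinity. *)
Notation line F := ((F * F) + option F)%type.

Section Plane.
Variable F : finFieldType.

Definition DO_poly (p : nat) (f : F -> F) : Prop :=
  exists (n : nat) (a : 'I_n -> 'I_n -> F),
    forall x, f x = \sum_(i < n) \sum_(j < n) a i j * x ^+ (p ^ i + p ^ j).

Definition planar (f : F -> F) : Prop :=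
  forall a : F, a != 0 -> bijective (fun x => f (x + a) - f x).

Definition inc (f : F -> F) (P : point F) (l : line F) : bool :=
  match l, P with
  | inl (a, b), inl (x, y) => y == f (x + a) - b
  | inl (a, _), inr (Some c) => c == a
  | inl _, inr None => false
  | inr (Some a), inl (x, _) => x == a
  | inr (Some _), inr (Some _) => false
  | inr (Some _), inr None => true
  | inr None, inl _ => false
  | inr None, inr _ => true
  end.

Definition L_inf : line F := inr None.
Definition N_ (a : F) : line F := inr (Some a).
Definition P_inf : point F := inr None.

Definition collineation (f : F -> F) (g : {perm point F}) : bool :=
  [forall l : line F, [exists l' : line F,
     [forall P : point F, inc f (g P) l' == inc f P l]]].

Definition fixes_line (f : F -> F) (g : {perm point F}) (l : line F) : bool :=
  [forall P : point F, inc f (g P) l == inc f P l].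

Definition elation (f : F -> F) (g : {perm point F}) (axis : line F) (center : point F) : bool :=
  [&& collineation f g, inc f center axis,
      [forall P : point F, inc f P axis ==> (g P == P)] &
      [forall l : line F, inc f center l ==> fixes_line f g l]].

Definition elation_group (f : F -> F) (axis : line F) (center : point F) : {set {perm point F}} :=
  [set g | elation f g axis center].

Definition translation_group (f : F -> F) : {set {perm point F}} :=
  [set g | [exists c : point F, elation f g L_inf c]].

Definition shift_group (f : F -> F) : {set {perm point F}} :=
  [set g | collineation f g &&
     [exists u : F, exists v : F, forall x : F, forall y : F,
        g (inl (x, y)) == inl (x + u, y + v)]].

Definition star (f : F -> F) (x y : F) : F := (f (x + y) - f x - f y) / 2.

Definition sigma (f : F -> F) (u v w : F) (P : point F) : point F :=
  match P with
  | inl (x, y) => inl (x + u, y + 2 * star f w x - v)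
  | inr (Some x) => inr (Some (x + w - u))
  | inr None => inr None
  end.

Definition is_sigma (f : F -> F) (g : {perm point F}) (u v w : F) : bool :=
  [forall P : point F, g P == sigma f u v w P].

End Plane.

(* Because f is a Dembowski-Ostrom polynomial in odd characteristic,
   f (x + y) = f x + f y + 2 (x * y) with * symmetric and biadditive, and
   planarity says that z |-> z * d is onto (so * is nondegenerate) for d != 0.
   The composition law of the sigma's is then a direct computation, and sigma_{u,v,w}
   is a collineation mapping L_{a,b} onto L_{a-u+w,b'}.  Conversely, every
   collineation in (b)-(d) turns out to act on affine points as a shear
   (x, y) |-> (x + u, y + h x).  If such a shear maps (a) to (c), comparing L_{a,0}
   with its image gives h x = h 0 + 2 x * (u + c - a); by nondegeneracy c - a does
   not depend on a, which makes the shear some sigma_{u,v,w}. *)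

From Pilot Require Import Defs.
From HB Require Import structures.
From mathcomp Require Import all_boot all_order all_algebra all_fingroup.
From mathcomp Require Import all_field.
From mathcomp Require Import ring.
Import GRing.Theory.
Local Open Scope ring_scope.
Set Implicit Arguments.
Unset Strict Implicit.
Unset Printing Implicit Defensive.

Lemma pchar_odd_two_neq0 (F : fieldType) (p : nat) :
  p \in [pchar F] -> odd p -> (2 : F) != 0.
Proof.
move=> pF p_odd; apply/eqP => two0.
have := dvdn_pcharf pF 2; rewrite two0 eqxx dvdn_prime2 ?(pcharf_prime pF) //.
by move/eqP=> p2; rewrite p2 in p_odd.
Qed.

Section DembowskiOstrom.
Variables (F : finFieldType) (p : nat) (f : F -> F).
Hypotheses (pF : p \in [pchar F]) (DOf : DO_poly p f).

Lemma exprDn_pchar_pow i (x y : F) : (x + y) ^+ (p ^ i) = x ^+ (p ^ i) + y ^+ (p ^ i).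
Proof.
apply: exprDn_pchar.
by rewrite (eq_pnat _ (pcharf_eq pF)) pnatX pnat_id ?(pcharf_prime pF) ?orbT.
Qed.

Lemma DO_poly0 : f 0 = 0.
Proof.
have p_gt0 := prime_gt0 (pcharf_prime pF).
case: DOf => n [a ->]; apply: big1 => i _; apply: big1 => j _.
by rewrite expr0n addn_eq0 expn_eq0 eqn0Ngt p_gt0 mulr0.
Qed.

(* Each monomial x^(p^i + p^j) is a product of two additive maps, hence quadratic. *)
Lemma DO_poly_quad x y z :
  f (x + y + z) + f x + f y + f z = f (x + y) + f (x + z) + f (y + z).
Proof.
case: DOf => n [a fE]; rewrite !fE -!big_split /=; apply: eq_bigr => i _.
rewrite -!big_split /=; apply: eq_bigr => j _.
rewrite !exprD !exprDn_pchar_pow; ring.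
Qed.

End DembowskiOstrom.

Section Plane.
Variables (F : finFieldType) (f : F -> F).
Hypotheses (two_neq0 : (2 : F) != 0) (f0 : f 0 = 0)
  (f_quad : forall x y z,
     f (x + y + z) + f x + f y + f z = f (x + y) + f (x + z) + f (y + z))
  (f_planar : planar f).

Local Notation star := (star f).
Local Notation sigma := (sigma f).
Local Notation inc := (inc f).

Lemma fD x y : f (x + y) = f x + f y + 2 * star x y.
Proof. by rewrite /Defs.star mulrC divfK //; ring. Qed.

Lemma starC x y : star x y = star y x.
Proof. by rewrite /Defs.star (addrC x y); congr (_ / _); ring. Qed.

Lemma starDl x y z : star (x + y) z = star x z + star y z.
Proof.
rewrite /Defs.star -mulrDl; congr (_ / _).
have -> : f (x + y + z) = f (x + y) + f (x + z) + f (y + z) - f x - f y - f z.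
  by rewrite -f_quad; ring.
ring.
Qed.

Lemma starDr x y z : star x (y + z) = star x y + star x z.
Proof. by rewrite starC starDl !(starC x). Qed.

Lemma star0l x : star 0 x = 0.
Proof. by rewrite /Defs.star add0r f0 subr0 subrr mul0r. Qed.

Lemma star0r x : star x 0 = 0.
Proof. by rewrite starC star0l. Qed.

Lemma starNl x y : star (- x) y = - star x y.
Proof. by apply/eqP; rewrite -subr_eq0 opprK -starDl addNr star0l. Qed.

Lemma starNr x y : star x (- y) = - star x y.
Proof. by rewrite starC starNl starC. Qed.

Lemma starBr x y z : star x (y - z) = star x y - star x z.
Proof. by rewrite starDr starNr. Qed.

(* Planarity says exactly that [z |-> 2 * star z d + f d] is bijective for [d != 0]. *)
Lemma star_rinj d d' : (forall z, star z d = star z d') -> d = d'.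
Proof.
move=> eq_star; apply/eqP; rewrite -subr_eq0; apply: contraT => dd'_neq0.
have /bij_inj diff_inj := f_planar dd'_neq0.
have star0 z : star z (d - d') = 0 by rewrite starBr eq_star subrr.
have := diff_inj 0 1; rewrite /= !fD !star0 f0 => /(_ _)/eqP.
by rewrite eq_sym oner_eq0; apply; ring.
Qed.

Lemma star_surj d t : d != 0 -> exists z, star z d = t.
Proof.
move=> /f_planar [g _ gK]; exists (g (f d + 2 * t)).
have := gK (f d + 2 * t); rewrite /= fD; set z := g _ => zE.
by apply: (mulfI two_neq0); rewrite -[RHS](addKr (f d)) -zE; ring.
Qed.

Lemma affine_line_through x1 y1 x2 y2 : x1 != x2 ->
  exists a b, y1 = f (x1 + a) - b /\ y2 = f (x2 + a) - b.
Proof.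
rewrite -subr_eq0 => dx_neq0.
have [z zE] := star_surj ((y1 - y2 - f (x1 - x2)) / 2) dx_neq0.
exists (z - x2), (f z - y2); split; last by rewrite (addrC x2) subrK; ring.
rewrite (_ : x1 + (z - x2) = z + (x1 - x2)); last by ring.
by rewrite fD zE mulrC divfK //; ring.
Qed.

Lemma sigmaM u v w u' v' w' P :
  sigma u' v' w' (sigma u v w P) = sigma (u + u') (v + v' - 2 * star w' u) (w + w') P.
Proof.
case: P => [[x y]|[x|]] //=; last by congr (inr (Some _)); ring.
by rewrite starDl starDr; congr (inl (_, _)); ring.
Qed.

Lemma sigma1 P : sigma 0 0 0 P = P.
Proof. by case: P => [[x y]|[x|]] //=; rewrite ?star0l ?mulr0 ?addr0 ?subr0. Qed.

Lemma sigma_inj u v w : injective (sigma u v w).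
Proof.
apply: (can_inj (g := sigma (- u) (- v - 2 * star w u) (- w))) => P.
by rewrite sigmaM starNl (_ : v + _ - _ = 0) ?subrr ?sigma1 //; ring.
Qed.

Definition sigma_perm u v w : {perm point F} := perm (@sigma_inj u v w).

Lemma sigma_permE u v w P : sigma_perm u v w P = sigma u v w P.
Proof. by rewrite permE. Qed.

Lemma is_sigmaP (g : {perm point F}) u v w :
  reflect (forall P, g P = sigma u v w P) (is_sigma f g u v w).
Proof. by apply: (iffP forallP) => gE P; apply/eqP. Qed.

Lemma is_sigma_perm u v w : is_sigma f (sigma_perm u v w) u v w.
Proof. by apply/is_sigmaP => P; rewrite sigma_permE. Qed.

Lemma collineationP (g : {perm point F}) :
  reflect (forall l, exists l', forall P, inc (g P) l' = inc P l) (collineation f g).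
Proof.
apply: (iffP forallP) => g_coll l.
  by have /existsP [l' /forallP lE] := g_coll l; exists l' => P; apply/eqP.
by have [l' lE] := g_coll l; apply/existsP; exists l'; apply/forallP => P; rewrite lE.
Qed.

Lemma elationP (g : {perm point F}) axis center :
  reflect [/\ collineation f g, inc center axis,
              forall P, inc P axis -> g P = P &
              forall l, inc center l -> forall P, inc (g P) l = inc P l]
          (elation f g axis center).
Proof.
apply: (iffP and4P) => -[g_coll center_axis fix_axis fix_lines]; split => //.
- by move=> P /(implyP (forallP fix_axis P))/eqP.
- by move=> l /(implyP (forallP fix_lines l))/forallP lE P; apply/eqP.
- by apply/forallP => P; apply/implyP => /fix_axis ->.
- by apply/forallP => l; apply/implyP => /fix_lines lE; apply/forallP => P; rewrite lE.
Qed.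

Lemma sigma_collineation (g : {perm point F}) u v w :
  is_sigma f g u v w -> collineation f g.
Proof.
move=> /is_sigmaP gE; apply/collineationP => -[[a b]|[a|]].
- exists (inl (a - u + w, b + v + f w + 2 * star a w)) => -[[x y]|[c|]]; rewrite gE //=.
    rewrite (_ : x + u + (a - u + w) = x + a + w); last by ring.
    rewrite fD starDl (starC w x).
    by rewrite -subr_eq0 -[RHS]subr_eq0; congr (_ == 0); ring.
  by rewrite -subr_eq0 -[RHS]subr_eq0; congr (_ == 0); ring.
- by exists (inr (Some (a + u))) => -[[x y]|[c|]]; rewrite gE //= (inj_eq (addIr _)).
- by exists (inr None) => -[[x y]|[c|]]; rewrite gE.
Qed.

Lemma collineation_affine_line (g : {perm point F}) a b c :
  collineation f g ->
  (forall x y, exists x' y', g (inl (x, y)) = inl (x', y')) ->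
  g (inr (Some a)) = inr (Some c) ->
  exists b', forall x y, inc (g (inl (x, y))) (inl (c, b')) = (y == f (x + a) - b).
Proof.
move=> /collineationP/(_ (inl (a, b))) [[[a' b']|[d|]] lE] g_aff ga.
- have := lE (inr (Some a)); rewrite ga /= eqxx => /eqP ->.
  by exists b' => x y; apply: (lE (inl (x, y))).
- by have := lE (inr (Some a)); rewrite ga /= eqxx.
- have [x' [y' gE]] := g_aff 0 (f (0 + a) - b).
  by have := lE (inl (0, f (0 + a) - b)); rewrite gE /= eqxx.
Qed.

Section Shear.
Variables (g : {perm point F}) (u : F) (h : F -> F).
Hypotheses (g_coll : collineation f g)
           (gE : forall x y, g (inl (x, y)) = inl (x + u, y + h x)).

Lemma shear_slope a c :
  g (inr (Some a)) = inr (Some c) -> forall x, h x = h 0 + 2 * star x (u + c - a).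
Proof.
move=> ga x; set d := u + c - a.
have g_aff x' y' : exists x'' y'', g (inl (x', y')) = inl (x'', y'').
  by exists (x' + u), (y' + h x').
have [b' lE] := collineation_affine_line 0 g_coll g_aff ga.
have onl z : h z = f (z + a + d) - f (z + a) - b'.
  have := lE z (f (z + a)); rewrite gE /= subr0 eqxx => /eqP zE.
  rewrite (_ : z + a + d = z + u + c); last by rewrite /d; ring.
  by apply: (addrI (f (z + a))); rewrite zE; ring.
by rewrite (onl x) (onl 0) add0r (fD (x + a)) (fD a) starDl; ring.
Qed.

Lemma shear_collineation_sigma : exists v w, is_sigma f g u v w.
Proof.
have g_inr s : exists c, g (inr s) = inr c.
  case gs: (g (inr s)) => [[x y]|c]; last by exists c.
  by have := gE (x - u) (y - h (x - u)); rewrite !subrK -gs => /perm_inj.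
have g_inf : g (inr None) = inr None.
  have [c gc] := g_inr None; rewrite gc.
  move/collineationP: g_coll => /(_ (N_ 0)) [[[a b]|[d|]] lE].
  - have := lE (inl (0, 0)); have := lE (inl (0, 1)); rewrite !gE /= !eqxx.
    move=> /eqP e1 /eqP e0; move: e1; rewrite -e0 => /addIr/eqP.
    by rewrite oner_eq0.
  - by move: (lE (inr None)); rewrite gc; case: c {gc}.
  - by have := lE (inl (0, 0)); rewrite gE /= eqxx.
have g_slope a : exists c, g (inr (Some a)) = inr (Some c).
  have [[c|] ga] := g_inr (Some a); first by exists c.
  by move: ga; rewrite -g_inf => /perm_inj.
have [c0 gc0] := g_slope 0.
exists (- h 0), (u + c0); apply/is_sigmaP => -[[x y]|[a|]] /=.
- by rewrite gE (shear_slope gc0) subr0 opprK starC; congr (inl (_, _)); ring.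
- have [c gc] := g_slope a; rewrite gc; congr (inr (Some _)).
  have slopeE : u + c - a = u + c0 - 0.
    apply: star_rinj => x; apply: (mulfI two_neq0); apply: (addrI (h 0)).
    by rewrite -(shear_slope gc) -(shear_slope gc0).
  by rewrite subr0 in slopeE; rewrite -slopeE; ring.
- exact: g_inf.
Qed.

End Shear.

Lemma shear_elation_sigma (g : {perm point F}) u h :
  collineation f g -> (forall x y, g (inl (x, y)) = inl (x + u, y + h x)) ->
  g (inr (Some 0)) = inr (Some 0) -> exists v, is_sigma f g u v u.
Proof.
move=> g_coll gE g0; have [v [w g_sigma]] := shear_collineation_sigma g_coll gE.
exists v; suff wu : w = u by rewrite wu in g_sigma.
move/is_sigmaP: (g_sigma) => /(_ (inr (Some 0))); rewrite g0 /= add0r => -[].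
by move/eqP; rewrite eq_sym subr_eq0 => /eqP.
Qed.

Lemma shift_groupE :
  shift_group f = [set g | [exists u, exists v, is_sigma f g u v 0]].
Proof.
apply/setP => g; rewrite !inE; apply/andP/existsP.
- case=> g_coll /existsP [u /existsP [v /forallP shiftE]].
  have gE x y : g (inl (x, y)) = inl (x + u, y + (fun _ => v) x).
    by apply/eqP; have /forallP := shiftE x; apply.
  have [v' [w /is_sigmaP g_sigma]] := shear_collineation_sigma g_coll gE.
  have shiftE' x : 2 * star w x - v' = v.
    by have := g_sigma (inl (x, 0)); rewrite gE /= !add0r => -[].
  have w0 : w = 0.
    apply: star_rinj => z; rewrite starC star0r; apply: (mulfI two_neq0).
    by apply: (addIr (- v')); rewrite shiftE' -(shiftE' 0) star0r.
  by exists u; apply/existsP; exists v'; apply/is_sigmaP; rewrite -w0.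
- case=> u /existsP [v g_sigma]; split; first exact: sigma_collineation g_sigma.
  apply/existsP; exists u; apply/existsP; exists (- v).
  apply/forallP => x; apply/forallP => y.
  by move/is_sigmaP: g_sigma => ->; rewrite /= star0l mulr0 addr0.
Qed.

Lemma fixed_verticals (g : {perm point F}) :
  g (inr None) = inr None -> (forall x P, inc (g P) (N_ x) = inc P (N_ x)) ->
  exists psi : F -> F -> F, forall x y, g (inl (x, y)) = inl (x, psi x y).
Proof.
move=> g_inf fixN; exists (fun x y => if g (inl (x, y)) is inl (_, y') then y' else 0).
move=> x y; have := fixN x (inl (x, y)); rewrite /= eqxx.
case gxy: (g (inl (x, y))) => [[x' y']|[c|]] //=; first by move/eqP ->.
by move: gxy; rewrite -g_inf => /perm_inj.
Qed.

Lemma elation_N0_infE :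
  elation_group f (N_ 0) (P_inf F) = [set g | [exists w, is_sigma f g 0 0 w]].
Proof.
apply/setP => g; rewrite !inE; apply/elationP/existsP.
- case=> g_coll _ fix_axis fix_lines.
  have g_inf : g (inr None) = inr None by exact: fix_axis.
  have gE0 y : g (inl (0, y)) = inl (0, y) by apply: fix_axis; rewrite /= eqxx.
  have [psi psiE] := fixed_verticals g_inf (fun x => fix_lines (N_ x) erefl).
  have g_aff x y : exists x' y', g (inl (x, y)) = inl (x', y').
    by exists x, (psi x y).
  have [c gc] : exists c, g (inr (Some 0)) = inr (Some c).
    have := fix_lines (L_inf F) erefl (inr (Some 0)).
    case g0: (g (inr (Some 0))) => [[x y]|[c|]] //= _; first by exists c.
    by move: g0; rewrite -g_inf => /perm_inj.
  (* The line L_{0, f x - y} through (x, y) also passes through the fixed point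
     (0, y - f x). *)
  have gE x y : g (inl (x, y)) = inl (x + 0, y + (f (x + c) - f x - f c)).
    rewrite psiE addr0; congr (inl (_, _)).
    have [b' lE] := collineation_affine_line (f x - y) g_coll g_aff gc.
    have := lE 0 (f 0 - (f x - y)); rewrite gE0 /= !add0r eqxx => /eqP b'E.
    have := lE x y; rewrite psiE /= addr0 (_ : f x - (f x - y) = y) ?eqxx; last by ring.
    move=> /eqP ->; rewrite (_ : b' = f c - (f 0 - (f x - y))); last by rewrite b'E; ring.
    by rewrite f0; ring.
  have [v [w g_sigma]] := shear_collineation_sigma g_coll gE.
  have v0 : v = 0.
    move/is_sigmaP: (g_sigma) => /(_ (inl (0, 0))); rewrite gE0 /= star0r mulr0 !add0r.
    by case=> /eqP; rewrite eq_sym oppr_eq0 => /eqP.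
  by exists w; rewrite v0 in g_sigma.
- case=> w /is_sigmaP gE; split => //.
  + by apply: (@sigma_collineation g 0 0 w); apply/is_sigmaP.
  + move=> [[x y]|[c|]] //=; rewrite gE //= => /eqP ->.
    by rewrite addr0 star0r mulr0 addr0 subr0.
  + move=> [[a b]|[a|]] //= _ [[x y]|[c|]]; by rewrite gE //= addr0.
Qed.

Lemma collineation_verticals (g : {perm point F}) :
  collineation f g -> g (inr None) = inr None ->
  (forall x y, exists x' y', g (inl (x, y)) = inl (x', y')) ->
  exists (pi : F -> F) (psi : F -> F -> F),
    forall x y, g (inl (x, y)) = inl (pi x, psi x y).
Proof.
move=> g_coll g_inf g_aff.
exists (fun x => if g (inl (x, 0)) is inl (x', _) then x' else 0).
exists (fun x y => if g (inl (x, y)) is inl (_, y') then y' else 0) => x y.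
have [x1 [y1 gxy]] := g_aff x y; have [x2 [y2 gx0]] := g_aff x 0.
rewrite gxy gx0; congr (inl (_, _)).
move/collineationP: g_coll => /(_ (N_ x)) [[[a b]|[d|]] lE].
- by have := lE (inr None); rewrite g_inf.
- have := lE (inl (x, y)); have := lE (inl (x, 0)).
  by rewrite gxy gx0 /= !eqxx => /eqP -> /eqP ->.
- by have := lE (inl (x, 0)); rewrite gx0 /= eqxx.
Qed.

Lemma elation_Linf_fixes (g : {perm point F}) c :
  elation f g (L_inf F) c ->
  [/\ collineation f g, forall s, g (inr s) = inr s,
      forall x y, exists x' y', g (inl (x, y)) = inl (x', y') &
      forall l, inc c l -> forall P, inc (g P) l = inc P l].
Proof.
case/elationP => g_coll _ fix_axis fix_lines.
have g_fix s : g (inr s) = inr s by exact: fix_axis.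
split=> // x y; case gxy: (g (inl (x, y))) => [[x' y']|s]; first by exists x', y'.
by move: gxy; rewrite -g_fix => /perm_inj.
Qed.

Lemma elation_Linf_inf_shear (g : {perm point F}) :
  elation f g (L_inf F) (P_inf F) ->
  exists u h, forall x y, g (inl (x, y)) = inl (x + u, y + h x).
Proof.
case/elation_Linf_fixes => g_coll g_fix g_aff fix_lines.
have [psi psiE] := fixed_verticals (g_fix None) (fun x => fix_lines (N_ x) erefl).
(* Two affine points with distinct abscissae lie on a line L_{a,b}, which g maps
   onto some L_{a,b'}. *)
have shift_eq x1 y1 x2 y2 : x1 != x2 -> psi x1 y1 - y1 = psi x2 y2 - y2.
  move=> /(affine_line_through y1 y2) [a [b [e1 e2]]].
  have [b' lE] := collineation_affine_line b g_coll g_aff (g_fix (Some a)).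
  have := lE x1 y1; have := lE x2 y2; rewrite !psiE /= -e1 -e2 !eqxx.
  by move=> /eqP -> /eqP ->; rewrite e1 e2; ring.
have shiftE x y : psi x y - y = psi 0 0 - 0.
  have [-> | x_neq0] := eqVneq x 0; last exact: shift_eq.
  by rewrite (shift_eq 0 y 1 0) ?(shift_eq 1 0 0 0) // ?oner_neq0 // eq_sym oner_neq0.
exists 0, (fun _ => psi 0 0 - 0) => x y.
by rewrite psiE addr0 -(shiftE x y); congr (inl (_, _)); ring.
Qed.

Lemma elation_Linf_slope_shear (g : {perm point F}) a0 :
  elation f g (L_inf F) (inr (Some a0)) ->
  exists u h, forall x y, g (inl (x, y)) = inl (x + u, y + h x).
Proof.
case/elation_Linf_fixes => g_coll g_fix g_aff fix_lines.
have [pi [psi gE]] := collineation_verticals g_coll (g_fix None) g_aff.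
have psiE x y : psi x y = y + f (pi x + a0) - f (x + a0).
  have := fix_lines (inl (a0, f (x + a0) - y)) (eqxx a0) (inl (x, y)).
  rewrite gE /= (_ : f (x + a0) - (f (x + a0) - y) = y) ?eqxx; last by ring.
  by move/eqP ->; ring.
(* g maps L_{z + a0, 0} onto some L_{z + a0, b'}; reading this off at the image of
   (x, f (x + z + a0)) gives [2 * star z (pi x - x) = b'] for every x. *)
have pi_shift x : pi x - x = pi 0 - 0.
  apply: star_rinj => z; apply: (mulfI two_neq0).
  have [b' lE] := collineation_affine_line 0 g_coll g_aff (g_fix (Some (z + a0))).
  have onl x' : 2 * star z (pi x' - x') = b'.
    have [d pi_x'] : exists d, pi x' = x' + d by exists (pi x' - x'); ring.
    have := lE x' (f (x' + (z + a0))); rewrite gE psiE pi_x' /= subr0 eqxx => /eqP lineE.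
    rewrite (addrC x') addrK starC.
    have -> : b' = f (x' + d + (z + a0))
                   - (f (x' + (z + a0)) + f (x' + d + a0) - f (x' + a0)).
      by rewrite lineE; ring.
    by rewrite !fD !starDl !starDr; ring.
  by rewrite !onl.
exists (pi 0), (fun x => f (x + pi 0 + a0) - f (x + a0)) => x y.
rewrite gE psiE (_ : pi x = x + pi 0); first by congr (inl (_, _)); ring.
by rewrite -[pi x](subrK x) pi_shift subr0 addrC.
Qed.

Lemma sigma_translation (g : {perm point F}) u v :
  is_sigma f g u v u -> exists c, elation f g (L_inf F) c.
Proof.
move=> g_sigma; have /is_sigmaP gE := g_sigma; have g_coll := sigma_collineation g_sigma.
have g_fix s : g (inr s) = inr s by case: s => [a|]; rewrite gE //= addrK.
have [u0 | u_neq0] := eqVneq u 0.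
  exists (P_inf F); apply/elationP; split => //.
    by move=> [[x y]|s] //= _; rewrite g_fix.
  move=> [[a b]|[a|]] //= _ [[x y]|[c|]]; by rewrite gE u0 //= addr0.
(* The center is the slope a0 for which the image of L_{a0,b} is L_{a0,b} itself. *)
have [a0 a0E] := star_surj (- (f u + v) / 2) u_neq0.
have two_star : 2 * star a0 u = - (f u + v) by rewrite a0E mulrC divfK.
exists (inr (Some a0)); apply/elationP; split => //.
  by move=> [[x y]|s] //= _; rewrite g_fix.
move=> [[a b]|[a|]] //= a_eq; last by move=> [[x y]|[c|]]; rewrite gE.
move: a_eq => /eqP <- [[x y]|[c|]]; rewrite gE //=; last by rewrite addrK.
rewrite (_ : x + u + a0 = x + a0 + u); last by ring.
rewrite fD starDl mulrDr two_star (starC u x).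
by rewrite -subr_eq0 -[RHS]subr_eq0; congr (_ == 0); ring.
Qed.

Lemma translation_groupE :
  translation_group f = [set g | [exists u, exists v, is_sigma f g u v u]].
Proof.
apply/setP => g; rewrite !inE; apply/existsP/existsP => [[c g_el] | [u /existsP [v g_sigma]]].
- have [u [h gE]] : exists u h, forall x y, g (inl (x, y)) = inl (x + u, y + h x).
    have /elationP [_ c_axis _ _] := g_el.
    case: c c_axis g_el => [//|[a0|]] _.
      exact: elation_Linf_slope_shear.
    exact: elation_Linf_inf_shear.
  have [g_coll g_fix _ _] := elation_Linf_fixes g_el.
  have [v g_sigma] := shear_elation_sigma g_coll gE (g_fix _).
  by exists u; apply/existsP; exists v.
- exact: sigma_translation g_sigma.
Qed.

Definition sigma_group : {set {perm point F}} :=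
  [set g | [exists u, exists v, exists w, is_sigma f g u v w]].

Lemma group_set_sigma_group : group_set sigma_group.
Proof.
apply/group_setP; split.
  rewrite inE; apply/existsP; exists 0; apply/existsP; exists 0; apply/existsP; exists 0.
  by apply/is_sigmaP => P; rewrite perm1 sigma1.
move=> g g'; rewrite !inE.
case/existsP => u /existsP [v /existsP [w /is_sigmaP gE]].
case/existsP => u' /existsP [v' /existsP [w' /is_sigmaP g'E]].
apply/existsP; exists (u + u'); apply/existsP; exists (v + v' - 2 * star w' u).
by apply/existsP; exists (w + w'); apply/is_sigmaP => P; rewrite permM gE g'E sigmaM.
Qed.

Lemma sigma_group_collineation : {in sigma_group, forall g, collineation f g}.
Proof.
by move=> g; rewrite inE => /existsP [u /existsP [v /existsP [w /sigma_collineation]]].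
Qed.

Lemma sigma_perm_inj :
  injective (fun t : F * F * F => sigma_perm t.1.1 t.1.2 t.2).
Proof.
move=> [[u v] w] [[u' v'] w'] /= /permP sigmaE.
have := sigmaE (inl (0, 0)); rewrite !sigma_permE /= !star0r mulr0 !add0r.
case=> uu' /oppr_inj vv'.
have := sigmaE (inr (Some 0)); rewrite !sigma_permE /= !add0r => -[].
by rewrite uu' vv' => /addIr ->.
Qed.

Lemma card_sigma_group : #|sigma_group| = (#|F| ^ 3)%N.
Proof.
have -> : sigma_group = [set sigma_perm t.1.1 t.1.2 t.2 | t : F * F * F].
  apply/setP => g; rewrite inE; apply/idP/imsetP.
    case/existsP => u /existsP [v /existsP [w /is_sigmaP gE]].
    by exists (u, v, w) => //; apply/permP => P; rewrite gE sigma_permE.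
  case=> -[[u v] w] _ ->; apply/existsP; exists u; apply/existsP; exists v.
  by apply/existsP; exists w; exact: is_sigma_perm.
rewrite card_imset; last exact: sigma_perm_inj.
by rewrite !card_prod !expnS expn0 muln1 mulnA.
Qed.

End Plane.

Theorem lemma4p3 (F : finFieldType) (p k : nat) (f : F -> F) :
  prime p -> odd p -> p \in [pchar F] -> (0 < k)%N -> #|F| = ((p ^ k) ^ 2)%N ->
  DO_poly p f -> planar f ->
  let Sigma := [set g : {perm point F} |
                 [exists u : F, exists v : F, exists w : F, is_sigma f g u v w]] in
  [/\ (* (a) *)
      [/\ forall u v w : F, exists g : {perm point F}, is_sigma f g u v w,
          group_set Sigma,
          {in Sigma, forall g, collineation f g},
          #|Sigma| = ((p ^ k) ^ 6)%N &
          forall (u v w u' v' w' : F) (P : point F),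
            sigma f u' v' w' (sigma f u v w P)
            = sigma f (u + u') (v + v' - 2 * star f w' u) (w + w') P],
      (* (b) *)
      shift_group f = [set g | [exists u : F, exists v : F, is_sigma f g u v 0]],
      (* (c) *)
      translation_group f = [set g | [exists u : F, exists v : F, is_sigma f g u v u]] &
      (* (d) *)
      elation_group f (N_ 0) (P_inf F) = [set g | [exists w : F, is_sigma f g 0 0 w]]].
Proof.
move=> _ p_odd pF _ cardF DOf f_planar Sigma.
have two_neq0 := pchar_odd_two_neq0 pF p_odd.
have f0 := DO_poly0 pF DOf.
have f_quad := DO_poly_quad pF DOf.
split; last 3 first.
- exact: shift_groupE.
- exact: translation_groupE.
- exact: elation_N0_infE.
split.
- by move=> u v w; exists (sigma_perm f0 f_quad u v w); exact: is_sigma_perm.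
- exact: group_set_sigma_group.
- exact: sigma_group_collineation.
- by rewrite (card_sigma_group f0 f_quad) cardF -expnM.
- exact: sigmaM.
Qed.
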